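(* For every ordered field $C$, the theory $T_{\mathrm{Ham}}$ of independent dense Hamel spaces over $C$ is consistent, i.e., there exists an independent dense Hamel space over $C$.
   Context: Let $C$ be an ordered field. A $2$-ordered $C$-vector space is a $C$-vector space $G$ with two total orderings $<_0,<_1$ such that $G$ is an ordered $C$-vector space with respect to each. Put $G_\infty=G\cup\{\infty\}$, with $G<_0\infty$, $G<_1\infty$. A Hamel valuation on $G$ is a map $v:G\to G_\infty$ such that for all $x,y\in G$ and $\lambda\in C^{\times}$: $v(x)=\infty$ iff $x=0$; $v(x+y)\ge_0\min_0(v(x),v(y))$; $v(\lambda x)=v(x)$; if $0<_1x<_1y$ then $v(x)\ge_0v(y)$; $v(v(x))=v(x)$ (with $v(\infty)=\infty$); and $v(x)>_10$. A Hamel space is such a pair $(G,v)$. It is independent if for all $a_0,b_0,a_1,b_1\in G\cup\{\pm\infty\}$ with $a_0<_0b_0$ and $a_1<_1b_1$ there is $z\in G$ with $a_0<_0z<_0b_0$ and $a_1<_1z<_1b_1$; it is dense if for all $a<_0b$ in $G$ there is $c\in G$ with $a<_0v(c)<_0b$. *)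

From HB Require Import structures.
From mathcomp Require Import all_boot all_order all_algebra.
From Stdlib Require Import ClassicalDescription.
Set Implicit Arguments. Unset Strict Implicit. Unset Printing Implicit Defensive.
Import Order.TTheory GRing.Theory Num.Theory.
Local Open Scope ring_scope.

Section Hamel.
Variables (C : realFieldType) (G : lmodType C).

Definition total_order (le : G -> G -> Prop) : Prop :=
  [/\ (forall x, le x x),
      (forall x y, le x y -> le y x -> x = y),
      (forall x y z, le x y -> le y z -> le x z) &
      (forall x y, le x y \/ le y x)].

Definition strict (le : G -> G -> Prop) (x y : G) : Prop := le x y /\ x <> y.

Definition ordered_vspace (le : G -> G -> Prop) : Prop :=
  [/\ total_order le,
      (forall x y z, le x y -> le (x + z) (y + z)) &
      (forall (l : C) (x : G), 0 < l -> le 0 x -> le 0 (l *: x))].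

(* G_infty = G ∪ {∞}, encoded as option G with None = ∞. *)
Definition le_inf (le : G -> G -> Prop) (a b : option G) : Prop :=
  match a, b with
  | _, None => True
  | None, Some _ => False
  | Some x, Some y => le x y
  end.

Definition lt_inf (le : G -> G -> Prop) (a b : option G) : Prop :=
  le_inf le a b /\ a <> b.

Definition min_inf (le : G -> G -> Prop) (a b : option G) : option G :=
  match a, b with
  | None, _ => b
  | _, None => a
  | Some x, Some y => if excluded_middle_informative (le x y) then a else b
  end.

Definition v_inf (v : G -> option G) (a : option G) : option G :=
  match a with None => None | Some x => v x end.

Definition two_ordered (le0 le1 : G -> G -> Prop) : Prop :=
  ordered_vspace le0 /\ ordered_vspace le1.

Definition hamel_valuation (le0 le1 : G -> G -> Prop) (v : G -> option G) : Prop :=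
  (forall x, v x = None <-> x = 0) /\
  [/\
      (forall x y, le_inf le0 (min_inf le0 (v x) (v y)) (v (x + y))),
      (forall (l : C) x, l != 0 -> v (l *: x) = v x),
      (forall x y, strict le1 0 x -> strict le1 x y -> le_inf le0 (v y) (v x)),
      (forall x, v_inf v (v x) = v x) &
      (forall x, lt_inf le1 (Some 0) (v x))].

Definition hamel_space (le0 le1 : G -> G -> Prop) (v : G -> option G) : Prop :=
  two_ordered le0 le1 /\ hamel_valuation le0 le1 v.

Inductive ext := NegInf | Fin of G | PosInf.

Definition lt_ext (le : G -> G -> Prop) (a b : ext) : Prop :=
  match a, b with
  | NegInf, NegInf => False
  | NegInf, _ => True
  | Fin x, Fin y => strict le x y
  | Fin _, PosInf => True
  | _, _ => False
  end.

Definition independent (le0 le1 : G -> G -> Prop) : Prop :=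
  forall a0 b0 a1 b1 : ext,
    lt_ext le0 a0 b0 -> lt_ext le1 a1 b1 ->
    exists z : G, [/\ lt_ext le0 a0 (Fin z), lt_ext le0 (Fin z) b0,
                      lt_ext le1 a1 (Fin z) & lt_ext le1 (Fin z) b1].

Definition dense (le0 : G -> G -> Prop) (v : G -> option G) : Prop :=
  forall a b : G, strict le0 a b ->
    exists c : G, lt_inf le0 (Some a) (v c) /\ lt_inf le0 (v c) (Some b).

End Hamel.

From HB Require Import structures.
From mathcomp Require Import all_boot all_order all_algebra.
From mathcomp Require Import finmap.
From mathcomp.multinomials Require Import monalg.
From mathcomp Require Import ring lra.
From Stdlib Require Import ClassicalDescription.
Set Implicit Arguments. Unset Strict Implicit. Unset Printing Implicit Defensive.
Import Order.TTheory GRing.Theory Num.Theory.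
Local Open Scope ring_scope.

(* Take the C-vector space with basis (e_k), k = (n, s) ranging over nat * seq C, and
   let <_0 be the lexicographic order of coordinates, smaller indices being more
   significant; n is the level of k.  Vectors are coded injectively by sequences, so
   every vector t whose support has levels below n is named by the index (n, code t).
   The unitriangular automorphism e_k |-> gamma_k = e_k + (vector named by k) yields a
   second basis; <_1 is the lexicographic order of gamma-coordinates, indices being
   compared through the <_0-order of the gamma_k, and v x is the gamma_k at the leading
   gamma-coordinate of x.  As any vector t equals gamma_k - e_k for indices k of
   arbitrarily high level, where e_k is <_0-negligible, the gamma_k are <_0-dense; and a
   perturbation e_k2 - e_k1 that is negligible for <_0 can absorb the difference between
   the gamma-coordinates of any two vectors, which gives independence. *)

Section TotalOrder.
Variables (C : realFieldType) (G : lmodType C) (le : G -> G -> Prop).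
Hypothesis le_total : total_order le.

Lemma strict_trans x y z : strict le x y -> strict le y z -> strict le x z.
Proof.
case: le_total => _ anti trans _ [lexy nxy] [leyz nyz]; split; first exact: trans lexy leyz.
by move=> exz; subst z; apply: nxy; apply: anti.
Qed.

Lemma strict_total x y : x <> y -> strict le x y \/ strict le y x.
Proof.
case: le_total => _ _ _ tot nxy.
by case: (tot x y) => ?; [left | right]; split => // /esym.
Qed.

Lemma not_strict_le x y : ~ strict le x y -> le y x.
Proof.
case: le_total => refl _ _ _ nxy; case: (classic (x = y)) => [-> // | neq].
by case: (strict_total neq) => [/nxy | []].
Qed.

Lemma le_min_inf p q r : le p r \/ le q r ->
  le_inf le (min_inf le (Some p) (Some q)) (Some r).
Proof.
case: le_total => _ _ trans tot; rewrite /min_inf.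
case: excluded_middle_informative => [lepq | Nlepq] /= [lepr | leqr] //.
- exact: trans lepq leqr.
- by case: (tot p q) => // leqp; apply: trans leqp lepr.
Qed.

Lemma lt_inf_Some x y : strict le x y -> lt_inf le (Some x) (Some y).
Proof. by case=> lexy nxy; split => // - []. Qed.

End TotalOrder.

Section Pullback.
Variables (C : realFieldType) (G H : lmodType C) (phi : G -> H).
Hypotheses (phiD : {morph phi : x y / x + y}) (phiZ : forall l, {morph phi : x / l *: x})
  (phi_inj : injective phi).
Variable le : H -> H -> Prop.

Definition pullback (x y : G) := le (phi x) (phi y).

Lemma ordered_vspace_pullback : ordered_vspace le -> ordered_vspace pullback.
Proof.
move=> [[refl anti trans tot] leD leZ].
have phi0 : phi 0 = 0 by rewrite -(scale0r 0) phiZ scale0r.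
split; first split.
- by move=> x; apply: refl.
- by move=> x y lexy leyx; apply: phi_inj; apply: anti.
- by move=> x y z; apply: trans.
- by move=> x y; apply: tot.
- by move=> x y z; rewrite /pullback !phiD; apply: leD.
- by move=> l x l_gt0; rewrite /pullback phiZ phi0; apply: leZ.
Qed.

Lemma strict_pullback x y : strict pullback x y <-> strict le (phi x) (phi y).
Proof. by split=> - [lexy nxy]; split=> // exy; apply: nxy; [apply: phi_inj | rewrite exy]. Qed.

Definition ext_map (a : ext G) : ext H :=
  match a with NegInf => NegInf _ | Fin x => Fin (phi x) | PosInf => PosInf _ end.

Lemma lt_ext_pullback a b : lt_ext pullback a b <-> lt_ext le (ext_map a) (ext_map b).
Proof. by case: a b => [|x|] [|y|] //=; apply: strict_pullback. Qed.

End Pullback.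

Section LexOrder.
Variables (C : realFieldType) (K : choiceType) (ord : K -> K -> Prop).
Hypotheses (ord_irr : forall k, ~ ord k k)
  (ord_trans : forall i j k, ord i j -> ord j k -> ord i k)
  (ord_total : forall i j, i <> j -> ord i j \/ ord j i).
Local Notation H := {malg C[K]}.

Definition is_lead (x : H) k := x@_k != 0 /\ forall i, ord i k -> x@_i = 0.
Definition lpos_at (x : H) k := is_lead x k /\ 0 < x@_k.
Definition lpos (x : H) := exists k, lpos_at x k.
Definition lex_le (x y : H) := x = y \/ lpos (y - x).
Definition small k (u : H) := forall i, u@_i != 0 -> ord k i.

Lemma ord_asym i j : ord i j -> ~ ord j i.
Proof. by move=> ij /(ord_trans ij); apply: ord_irr. Qed.

Lemma is_lead_coef x k i : is_lead x k -> x@_i != 0 -> ~ ord i k.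
Proof. by move=> [_ x_lead] xi /x_lead; apply/eqP. Qed.

Lemma is_lead_uniq x k k' : is_lead x k -> is_lead x k' -> k = k'.
Proof.
move=> [xk x_lead] [xk' x_lead']; apply: NNPP => /ord_total [] kk'.
  by move: xk; rewrite x_lead' ?eqxx.
by move: xk'; rewrite x_lead ?eqxx.
Qed.

Lemma ex_ord_min (s : seq K) k0 : k0 \in s ->
  exists2 k, k \in s & forall i, i \in s -> ~ ord i k.
Proof.
elim: s k0 => [//|a s IH] k0 _.
case: s IH => [_ | b s IH].
  by exists a; rewrite ?mem_head // => i; rewrite inE => /eqP ->.
have [k ks k_min] := IH b (mem_head _ _).
case: (classic (ord a k)) => [ak | Nak].
  exists a; first exact: mem_head.
  move=> i; rewrite inE => /orP[/eqP -> // | /k_min Nik ia].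
  exact: Nik (ord_trans ia ak).
exists k; first by rewrite inE ks orbT.
by move=> i; rewrite inE => /orP[/eqP -> | /k_min].
Qed.

Lemma malg_neq0 (x : H) : x != 0 -> exists k, x@_k != 0.
Proof.
move=> /eqP x_neq0; apply: NNPP => Nex; apply: x_neq0; apply/malgP => k.
by rewrite mcoeff0; apply/eqP; apply: NNPP => xk; apply: Nex; exists k; apply/negP.
Qed.

Lemma ex_is_lead x : x != 0 -> exists k, is_lead x k.
Proof.
move=> /malg_neq0 [k0]; rewrite mcoeff_neq0 => /ex_ord_min [k kx k_min].
exists k; split; first by rewrite mcoeff_neq0.
move=> i ik; apply/eqP; rewrite mcoeff_eq0; apply/negP => ix.
exact: k_min ix ik.
Qed.

Lemma lpos_lead_gt0 x k : lpos x -> is_lead x k -> 0 < x@_k.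
Proof. by move=> [k' [lead' pos']] /(is_lead_uniq lead') <-. Qed.

Lemma lpos_neq0 x : lpos x -> x != 0.
Proof. by move=> [k [[xk _] _]]; apply: contraNneq xk => ->; rewrite mcoeff0. Qed.

Lemma is_leadZ l x k : l != 0 -> is_lead (l *: x) k <-> is_lead x k.
Proof.
move=> l_neq0; rewrite /is_lead mcoeffZ mulf_eq0 negb_or l_neq0 /=.
split=> - [xk x_lead]; split=> // i /x_lead; rewrite mcoeffZ.
  by move/eqP; rewrite mulf_eq0 (negbTE l_neq0) => /eqP.
by move=> ->; rewrite mulr0.
Qed.

Lemma is_leadN x k : is_lead (- x) k <-> is_lead x k.
Proof. by rewrite -scaleN1r; apply: is_leadZ; rewrite oppr_eq0 oner_eq0. Qed.

Lemma small_coef0 k u i : small k u -> ~ ord k i -> u@_i = 0.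
Proof. by move=> u_small Nki; apply/eqP; apply: NNPP => /negP /u_small. Qed.

Lemma is_lead_small k x kx : is_lead x kx -> ord k kx -> small k x.
Proof.
move=> x_lead kkx i /(is_lead_coef x_lead) Nikx.
case: (classic (i = kx)) => [-> // | /ord_total []] // kxi.
exact: ord_trans kkx kxi.
Qed.

Lemma lpos_at_addr_small x u k : lpos_at x k -> small k u -> lpos_at (x + u) k.
Proof.
move=> [[_ x_lead] x_pos] u_small.
have u0 i : i = k \/ ord i k -> u@_i = 0.
  by move=> ik; apply: small_coef0 u_small _; case: ik => [-> | /ord_asym].
have xuk : (x + u)@_k = x@_k by rewrite mcoeffD u0 ?addr0; [|left].
split; last by rewrite xuk.
split; first by rewrite xuk gt_eqF.
by move=> i ik; rewrite mcoeffD x_lead // u0 ?addr0 //; right.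
Qed.

Lemma lposD x y : lpos x -> lpos y -> lpos (x + y).
Proof.
move=> [kx [x_lead x_pos]] [ky [y_lead y_pos]].
case: (classic (kx = ky)) => [eq_k | /ord_total [] lt_k].
- subst ky; exists kx; have xyk : 0 < (x + y)@_kx by rewrite mcoeffD addr_gt0.
  split => //; split; first by rewrite gt_eqF.
  by move=> i ik; rewrite mcoeffD x_lead.2 // y_lead.2 // addr0.
- by exists kx; apply: lpos_at_addr_small (is_lead_small y_lead lt_k).
- by exists ky; rewrite addrC; apply: lpos_at_addr_small (is_lead_small x_lead lt_k).
Qed.

Lemma lpos_atZ l x k : 0 < l -> lpos_at x k -> lpos_at (l *: x) k.
Proof.
move=> l_gt0 [x_lead x_pos]; split; first exact/is_leadZ/x_lead/lt0r_neq0.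
by rewrite mcoeffZ mulr_gt0.
Qed.

Lemma lposZ l x : 0 < l -> lpos x -> lpos (l *: x).
Proof. by move=> l_gt0 [k x_pos]; exists k; apply: lpos_atZ. Qed.

Lemma lpos_asym x : lpos x -> ~ lpos (- x).
Proof.
move=> [k [x_lead x_pos]] Nx_lpos.
have := lpos_lead_gt0 Nx_lpos (proj2 (is_leadN x k) x_lead).
by rewrite mcoeffN oppr_gt0 ltNge ltW.
Qed.

Lemma lpos_total x : x != 0 -> lpos x \/ lpos (- x).
Proof.
move=> /ex_is_lead [k x_lead]; case: (ltgtP (x@_k) 0) => [x_neg | x_pos | x0].
- by right; exists k; split; [apply/is_leadN | rewrite mcoeffN oppr_gt0].
- by left; exists k.
- by case: x_lead; rewrite x0 eqxx.
Qed.

Lemma lex_le_ordered : ordered_vspace lex_le.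
Proof.
split; first split.
- by move=> x; left.
- move=> x y [// | lpos_yx] [// | lpos_xy].
  by case: (lpos_asym lpos_yx); rewrite opprB.
- move=> x y z [-> // | lpos_yx] [<- | lpos_zy]; first by right.
  by right; rewrite -(subrK y z) -addrA; apply: lposD.
- move=> x y; case: (eqVneq x y) => [-> | neq]; first by left; left.
  have : y - x != 0 by rewrite subr_eq0 eq_sym.
  by case/lpos_total => lpos_yx; [left | right]; right; rewrite // -opprB.
- by move=> x y z [-> | lpos_yx]; [left | right; rewrite opprD addrACA subrr addr0].
- move=> l x l_gt0 [<- | lpos_x]; first by left; rewrite scaler0.
  by right; rewrite subr0; apply: lposZ; rewrite // -[x]subr0.
Qed.

Lemma lex_lt x y : strict lex_le x y <-> lpos (y - x).
Proof.
split=> [[[-> | //] //] | lpos_yx]; split; [by right | move=> exy].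
by move: lpos_yx; rewrite exy subrr => /lpos_neq0; rewrite eqxx.
Qed.

Lemma lead_addr x y k kx ky : is_lead (x + y) k -> is_lead x kx -> is_lead y ky ->
  ~ ord k kx \/ ~ ord k ky.
Proof.
move=> [xyk _] x_lead y_lead; case: (eqVneq x@_k 0) => [x0 | xk].
  by right; apply: is_lead_coef y_lead _; move: xyk; rewrite mcoeffD x0 add0r.
by left; apply: is_lead_coef x_lead xk.
Qed.

Lemma lead_antitone x y kx ky : lpos x -> lpos (y - x) -> is_lead x kx -> is_lead y ky ->
  ~ ord kx ky.
Proof.
move=> x_lpos yx_lpos x_lead [_ y_lead] kxy.
have y0 i : i = kx \/ ord i kx -> y@_i = 0.
  by move=> [-> | ikx]; apply: y_lead; [|apply: ord_trans ikx kxy].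
have yx_lead : is_lead (y - x) kx.
  split; first by rewrite mcoeffB y0 ?sub0r ?oppr_eq0; [case: x_lead | left].
  by move=> i ikx; rewrite mcoeffB y0 ?x_lead.2 ?subr0 //; right.
have := lpos_lead_gt0 yx_lpos yx_lead; have := lpos_lead_gt0 x_lpos x_lead.
by rewrite mcoeffB y0; [lra | left].
Qed.

Lemma small_unit j k : ord j k -> small j << k >>.
Proof.
by move=> jk i; rewrite mcoeffU; case: (eqVneq k i) => [<- // | _]; rewrite mulr0n eqxx.
Qed.

Lemma smallN j u : small j u -> small j (- u).
Proof. by move=> u_small i; rewrite mcoeffN oppr_eq0; apply: u_small. Qed.

Lemma smallD j u w : small j u -> small j w -> small j (u + w).
Proof.
move=> u_small w_small i; rewrite mcoeffD.
by case: (eqVneq u@_i 0) => [-> | /u_small //]; rewrite add0r; apply: w_small.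
Qed.

Lemma small_unitB j k1 k2 : ord j k1 -> ord j k2 -> small j (<< k2 >> - << k1 >>).
Proof. by move=> jk1 jk2; apply: smallD (small_unit jk2) (smallN (small_unit jk1)). Qed.

Lemma lpos_at_unit k : lpos_at << k >> k.
Proof.
rewrite /lpos_at /is_lead mcoeffU eqxx ltr01 oner_eq0; split=> //; split=> // i ik.
by rewrite mcoeffU; case: (eqVneq k i) => // ki; move: ik; rewrite ki => /ord_irr.
Qed.

Lemma lpos_at_min x k : (forall i, ~ ord i k) -> 0 < x@_k -> lpos_at x k.
Proof. by move=> k_min x_pos; split=> //; split=> [|i /k_min //]; rewrite gt_eqF. Qed.

Lemma lex_nbhd (k0 : K) (a b : ext H) : lt_ext lex_le a b ->
  exists m j, forall u, small j u ->
    lt_ext lex_le a (Fin (m + u)) /\ lt_ext lex_le (Fin (m + u)) b.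
Proof.
have unit_small k u : small k u -> lpos (<< k >> + u).
  by move=> u_small; exists k; apply: lpos_at_addr_small (lpos_at_unit k) u_small.
case: a b => [|a|] [|b|] //= lt_ab.
- exists (b - << k0 >>), k0 => u u_small; split=> //; apply/lex_lt.
  by rewrite opprD opprB addrA addrCA subrr addr0; apply/unit_small/smallN.
- by exists 0, k0.
- move/lex_lt: lt_ab => [j b_sub_a].
  have half_gt0 : 0 < 2^-1 :> C by rewrite invr_gt0 ltr0n.
  have half_lt1 : 0 < 1 - 2^-1 :> C by rewrite subr_gt0 invf_lt1 ?ltr0n ?ltr1n.
  exists (a + 2^-1 *: (b - a)), j => u u_small; split; apply/lex_lt; exists j.
    rewrite addrAC [a + _]addrC addrK.
    exact: lpos_at_addr_small (lpos_atZ half_gt0 b_sub_a) u_small.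
  have -> : b - (a + 2^-1 *: (b - a) + u) = (1 - 2^-1) *: (b - a) + - u.
    by apply/malgP => i; rewrite !(mcoeffD, mcoeffN, mcoeffZ); ring.
  exact: lpos_at_addr_small (lpos_atZ half_lt1 b_sub_a) (smallN u_small).
- exists (a + << k0 >>), k0 => u u_small; split=> //; apply/lex_lt.
  by rewrite addrAC [a + _]addrC addrK; apply: unit_small.
Qed.
End LexOrder.

Section Unitriangular.
Variables (C : realFieldType) (K : choiceType) (rank : K -> nat).
Local Notation H := {malg C[K]}.

Definition bounded n (x : H) := forall i, x@_i != 0 -> (rank i < n)%N.

Lemma bounded_eq0 x : bounded 0 x -> x = 0.
Proof.
move=> x_bnd; apply/malgP => i; rewrite mcoeff0.
by apply/eqP; apply: NNPP => /negP /x_bnd.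
Qed.

Lemma bounded_mono m n x : (m <= n)%N -> bounded m x -> bounded n x.
Proof. by move=> le_mn x_bnd i /x_bnd /leq_trans; apply. Qed.

Lemma boundedD n x y : bounded n x -> bounded n y -> bounded n (x + y).
Proof.
move=> x_bnd y_bnd i; rewrite mcoeffD.
by case: (eqVneq x@_i 0) => [-> | /x_bnd //]; rewrite add0r; apply: y_bnd.
Qed.

Lemma boundedZ n l x : bounded n x -> bounded n (l *: x).
Proof. by move=> x_bnd i; rewrite mcoeffZ mulf_eq0 negb_or => /andP[_ /x_bnd]. Qed.

Lemma ex_bounded x : exists n, bounded n x.
Proof.
exists (\max_(k <- msupp x) (rank k).+1) => i; rewrite mcoeff_neq0 => ix.
exact: leq_bigmax_seq ix isT.
Qed.

Variable d : K -> H.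
Hypothesis d_bounded : forall k, bounded (rank k) (d k).

Definition lin_ext (x : H) : H := \sum_(k <- msupp x) x@_k *: d k.

Lemma lin_extEw (S : {fset K}) x : (msupp x `<=` S)%fset ->
  lin_ext x = \sum_(k <- S) x@_k *: d k.
Proof.
move=> sub_xS; apply: big_fset_incl => // k _ /negbTE kx.
by rewrite mcoeff_outdom ?kx // scale0r.
Qed.

Lemma lin_extD x y : lin_ext (x + y) = lin_ext x + lin_ext y.
Proof.
pose S := (msupp x `|` msupp y)%fset.
rewrite (@lin_extEw S) ?msuppD_le // (@lin_extEw S x) ?fsubsetUl //.
rewrite (@lin_extEw S y) ?fsubsetUr // -big_split /=.
by apply: eq_bigr => k _; rewrite mcoeffD scalerDl.
Qed.

Lemma lin_extZ l x : lin_ext (l *: x) = l *: lin_ext x.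
Proof.
rewrite (@lin_extEw (msupp x)) ?msuppZ_le // scaler_sumr.
by apply: eq_bigr => k _; rewrite mcoeffZ scalerA.
Qed.

Lemma lin_extU k : lin_ext << k >> = d k.
Proof. by rewrite /lin_ext msuppU oner_eq0 big_seq_fset1 mcoeffUU scale1r. Qed.

Lemma bounded_lin_ext n x : bounded n.+1 x -> bounded n (lin_ext x).
Proof.
move=> x_bnd; rewrite /lin_ext big_seq; apply: big_ind => [i|y z|k kx].
- by rewrite mcoeff0 eqxx.
- exact: boundedD.
apply: boundedZ; apply: (bounded_mono _ (@d_bounded k)).
by rewrite -ltnS; apply: x_bnd; rewrite mcoeff_neq0.
Qed.

Definition unitri (x : H) : H := x + lin_ext x.

Lemma unitriD x y : unitri (x + y) = unitri x + unitri y.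
Proof. by rewrite /unitri lin_extD addrACA. Qed.

Lemma unitriZ l x : unitri (l *: x) = l *: unitri x.
Proof. by rewrite /unitri lin_extZ scalerDr. Qed.

Lemma unitriB x y : unitri (x - y) = unitri x - unitri y.
Proof. by rewrite -!scaleN1r unitriD unitriZ. Qed.

Lemma unitri0 : unitri 0 = 0.
Proof. by rewrite /unitri /lin_ext msupp0 big_seq_fset0 addr0. Qed.

Lemma unitriU k : unitri << k >> = << k >> + d k.
Proof. by rewrite /unitri lin_extU. Qed.

Lemma unitri_eq0 x : unitri x = 0 -> x = 0.
Proof.
have [n] := ex_bounded x; elim: n x => [|n IHn] x x_bnd ux0; first exact: bounded_eq0.
have x_eq : x = - lin_ext x by apply/eqP; rewrite -addr_eq0; apply/eqP.
by apply: IHn ux0; rewrite x_eq -scaleN1r; apply/boundedZ/bounded_lin_ext.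
Qed.

Lemma unitri_inj : injective unitri.
Proof.
move=> x y uxy; apply/eqP; rewrite -subr_eq0; apply/eqP/unitri_eq0.
by rewrite unitriB uxy subrr.
Qed.

Lemma unitri_surj x : exists y, unitri y == x.
Proof.
have [n] := ex_bounded x; elim: n x => [|n IHn] x x_bnd.
  by exists 0; rewrite (bounded_eq0 x_bnd) unitri0.
have [z /eqP uz] := IHn _ (bounded_lin_ext x_bnd).
by exists (x - z); rewrite unitriB uz /unitri addrK.
Qed.

Definition unitri_inv (x : H) : H := xchoose (unitri_surj x).

Lemma unitri_invK : cancel unitri_inv unitri.
Proof. by move=> x; apply/eqP; apply: (xchooseP (unitri_surj x)). Qed.

Lemma unitriK : cancel unitri unitri_inv.
Proof. by move=> x; apply: unitri_inj; rewrite unitri_invK. Qed.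

Lemma unitri_inv_inj : injective unitri_inv.
Proof. exact: can_inj unitri_invK. Qed.

Lemma unitri_inv0 : unitri_inv 0 = 0.
Proof. by rewrite -{1}unitri0 unitriK. Qed.

Lemma unitri_invD x y : unitri_inv (x + y) = unitri_inv x + unitri_inv y.
Proof. by apply: unitri_inj; rewrite unitriD !unitri_invK. Qed.

Lemma unitri_invZ l x : unitri_inv (l *: x) = l *: unitri_inv x.
Proof. by apply: unitri_inj; rewrite unitriZ !unitri_invK. Qed.
End Unitriangular.

Section Coding.
Variable C : realFieldType.

Definition idx : choiceType := (nat * seq C)%type.
Definition idx_lt (i j : idx) : Prop := ((i : nat *l seqlexi C) < j)%O.
Definition idx0 : idx := (0%N, [::]).
Local Notation H := {malg C[idx]}.

Lemma idx_lt_irr i : ~ idx_lt i i.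
Proof. by rewrite /idx_lt ltxx. Qed.

Lemma idx_lt_trans i j k : idx_lt i j -> idx_lt j k -> idx_lt i k.
Proof. exact: lt_trans. Qed.

Lemma idx_lt_total i j : i <> j -> idx_lt i j \/ idx_lt j i.
Proof.
move=> neq_ij; have : (i : nat *l seqlexi C) != j by apply/eqP.
by rewrite neq_lt => /orP.
Qed.

Lemma idx_lt_level i j : (i.1 < j.1)%N -> idx_lt i j.
Proof. by move=> lt_ij; rewrite /idx_lt ltEprodlexi /= leEnat ltnW //= leqNgt lt_ij. Qed.

Lemma idx_lt0 i : ~ idx_lt i idx0.
Proof. by rewrite /idx_lt ltEprodlexi; case: i => [[|n] s] //=; rewrite ltxis0. Qed.

Definition unary (n : nat) : seq C := rcons (nseq n 0) 1.

Lemma unary_cat n1 n2 r1 r2 : unary n1 ++ r1 = unary n2 ++ r2 -> n1 = n2 /\ r1 = r2.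
Proof.
elim: n1 n2 => [|n1 IH] [|n2] //= [] //.
- by move=> one0; have := oner_neq0 C; rewrite one0 eqxx.
- by move=> zero1; have := oner_neq0 C; rewrite -zero1 eqxx.
by move=> /IH [-> ->].
Qed.

(* Self-delimiting: a unary numeral ends at its only 1, and s is preceded by its size. *)
Definition enc_term (p : idx * C) : seq C :=
  unary p.1.1 ++ unary (size p.1.2) ++ p.1.2 ++ [:: p.2].

Lemma enc_term_cat p q r1 r2 : enc_term p ++ r1 = enc_term q ++ r2 -> p = q /\ r1 = r2.
Proof.
case: p q => [[n s] c] [[m t] e]; rewrite /enc_term /= -!catA.
move=> /unary_cat [-> /unary_cat [size_st /eqP]].
by rewrite eqseq_cat // => /andP[/eqP -> /eqP [-> ->]].
Qed.

Lemma enc_terms_inj : injective (fun ps => flatten (map enc_term ps)).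
Proof.
have enc_term_nil p : enc_term p != [::] by case: p => [[[|n] s] c].
elim=> [|p ps IH] [|q qs] //=.
- by move/(congr1 size); rewrite size_cat; case: (enc_term q) (enc_term_nil q).
- by move/(congr1 size); rewrite size_cat; case: (enc_term p) (enc_term_nil p).
- by move/enc_term_cat => [-> /IH ->].
Qed.

Definition code (t : H) : seq C := flatten (map enc_term [seq (k, t@_k) | k <- msupp t]).

Lemma code_inj : injective code.
Proof.
move=> t1 t2 /enc_terms_inj eq_terms.
have eq_supp : (msupp t1 : seq idx) = msupp t2.
  by have := congr1 (map fst) eq_terms; rewrite -!map_comp !map_id_in.
apply/malgP => k; case: (boolP (k \in msupp t1)) => k_t1.
  have : (k, t1@_k) \in [seq (k, t2@_k) | k <- msupp t2].
    by rewrite -eq_terms; apply: (map_f (fun k => (k, t1@_k))).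
  by case/mapP => k' _ [-> ->].
have k_t2 : k \notin (msupp t2 : seq idx) by rewrite -eq_supp.
by rewrite !mcoeff_outdom.
Qed.

Definition decode (k : idx) : H :=
  if excluded_middle_informative (exists! t, code t = k.2 /\ bounded fst k.1 t) is left ex
  then proj1_sig (constructive_definite_description _ ex) else 0.

Lemma decode_bounded k : bounded fst k.1 (decode k).
Proof.
rewrite /decode; case: excluded_middle_informative => [ex | _].
  by case: constructive_definite_description => t [].
by move=> i; rewrite mcoeff0 eqxx.
Qed.

Lemma decode_code n t : bounded fst n t -> decode (n, code t) = t.
Proof.
move=> t_bnd; rewrite /decode; case: excluded_middle_informative => [ex | []].
  by case: constructive_definite_description => t' /= [code_t' _]; apply: code_inj.
by exists t; split=> // t' [/code_inj ->].
Qed.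

Lemma decode_fresh t m : exists k, (m < k.1)%N /\ decode k = t.
Proof.
have [n t_bnd] := ex_bounded fst t.
exists ((n + m).+1, code t); split; first by rewrite ltnS leq_addl.
by apply: decode_code; apply: bounded_mono t_bnd; rewrite leqW ?leq_addr.
Qed.
End Coding.

Section Model.
Variable C : realFieldType.
Local Notation idx := (idx C).
Local Notation idx0 := (idx0 C).
Local Notation H := {malg C[idx]}.
Local Notation Psi := (unitri (@decode C)).
Local Notation decode_bnd := (@decode_bounded C).
Local Notation Phi := (unitri_inv decode_bnd).

Definition gamma (k : idx) : H := Psi << k >>.
Definition le0 : H -> H -> Prop := lex_le (@idx_lt C).
Definition lt_gamma (s t : idx) : Prop := strict le0 (gamma s) (gamma t).
(* [Phi x] is the coordinate vector of [x] in the basis [gamma]. *)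
Definition le1 : H -> H -> Prop := pullback Phi (lex_le lt_gamma).

Lemma le0_ordered : ordered_vspace le0.
Proof. exact: lex_le_ordered (@idx_lt_irr C) (@idx_lt_trans C) (@idx_lt_total C). Qed.

Lemma le0_total : total_order le0.
Proof. by case: le0_ordered. Qed.

Lemma gamma_inj : injective gamma.
Proof.
move=> s t /(unitri_inj decode_bnd) /(congr1 msupp).
by rewrite !msuppU oner_eq0 => /fset1_inj.
Qed.

Lemma lt_gamma_irr s : ~ lt_gamma s s.
Proof. by case. Qed.

Lemma lt_gamma_trans s t u : lt_gamma s t -> lt_gamma t u -> lt_gamma s u.
Proof. exact: (strict_trans le0_total). Qed.

Lemma lt_gamma_total s t : s <> t -> lt_gamma s t \/ lt_gamma t s.
Proof. by move=> neq; apply: (strict_total le0_total) => /gamma_inj. Qed.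

Lemma Phi_inj : injective Phi.
Proof. exact: unitri_inv_inj. Qed.

Lemma le1_ordered : ordered_vspace le1.
Proof.
apply: (ordered_vspace_pullback (unitri_invD decode_bnd) (unitri_invZ decode_bnd) Phi_inj).
exact: lex_le_ordered lt_gamma_irr lt_gamma_trans lt_gamma_total.
Qed.

Lemma gammaE k : gamma k = << k >> + decode k.
Proof. exact: unitriU. Qed.

Lemma Phi_gamma k : Phi (gamma k) = << k >>.
Proof. exact: (unitriK decode_bnd). Qed.

Lemma Phi_eq0 x : (Phi x == 0) = (x == 0).
Proof. by rewrite -{1}(unitri_inv0 decode_bnd) (inj_eq Phi_inj). Qed.

Definition v (x : H) : option H :=
  if excluded_middle_informative (exists! k, is_lead lt_gamma (Phi x) k) is left ex
  then Some (gamma (proj1_sig (constructive_definite_description _ ex))) else None.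

Lemma v_lead x k : is_lead lt_gamma (Phi x) k -> v x = Some (gamma k).
Proof.
move=> x_lead; rewrite /v; case: excluded_middle_informative => [ex | []].
  case: constructive_definite_description => k' /= x_lead'.
  by rewrite (is_lead_uniq lt_gamma_total x_lead' x_lead).
by exists k; split=> // k' x_lead'; apply: (is_lead_uniq lt_gamma_total x_lead x_lead').
Qed.

Lemma v_neq0 x : x != 0 -> exists2 k, is_lead lt_gamma (Phi x) k & v x = Some (gamma k).
Proof.
rewrite -Phi_eq0 => /(ex_is_lead lt_gamma_irr lt_gamma_trans) [k x_lead].
by exists k => //; apply: v_lead.
Qed.

Lemma v0 : v 0 = None.
Proof.
rewrite /v unitri_inv0; case: excluded_middle_informative => // ex; exfalso.
by case: ex => k [[]]; rewrite mcoeff0 eqxx.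
Qed.

Lemma v_gamma k : v (gamma k) = Some (gamma k).
Proof. by apply: v_lead; rewrite Phi_gamma; case: (lpos_at_unit C lt_gamma_irr k). Qed.

Lemma strict_le1 x y : strict le1 x y <-> lpos lt_gamma (Phi y - Phi x).
Proof. by rewrite strict_pullback ?lex_lt //; apply: Phi_inj. Qed.

Lemma v_eq_None x : v x = None <-> x = 0.
Proof.
split=> [vx | ->]; last exact: v0.
by apply/eqP; apply: NNPP => /negP /v_neq0 [k _]; rewrite vx.
Qed.

Lemma v_addr x y : le_inf le0 (min_inf le0 (v x) (v y)) (v (x + y)).
Proof.
have [le0_refl _ _ _] := le0_total.
case: (eqVneq x 0) => [-> | x_neq0].
  by rewrite v0 add0r /=; case: (v y) => //= g; apply: le0_refl.
case: (eqVneq y 0) => [-> | y_neq0].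
  by rewrite v0 addr0; case: (v x) => //= g; apply: le0_refl.
case: (eqVneq (x + y) 0) => [-> | /v_neq0 [k xy_lead ->]]; first by rewrite v0; case: min_inf.
have [kx x_lead ->] := v_neq0 x_neq0; have [ky y_lead ->] := v_neq0 y_neq0.
apply: (le_min_inf le0_total).
rewrite (unitri_invD decode_bnd) in xy_lead.
by case: (lead_addr xy_lead x_lead y_lead) => /(not_strict_le le0_total); [left | right].
Qed.

Lemma vZ l x : l != 0 -> v (l *: x) = v x.
Proof.
move=> l_neq0; case: (eqVneq x 0) => [-> | /v_neq0 [k x_lead ->]]; first by rewrite scaler0.
by apply: v_lead; rewrite (unitri_invZ decode_bnd) is_leadZ.
Qed.

Lemma v_le1_antitone x y : strict le1 0 x -> strict le1 x y -> le_inf le0 (v y) (v x).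
Proof.
move=> /strict_le1 + /strict_le1; rewrite (unitri_inv0 decode_bnd) subr0 => x_lpos yx_lpos.
have y_lpos : lpos lt_gamma (Phi y).
  rewrite -[Phi y](subrK (Phi x)).
  exact: (lposD lt_gamma_irr lt_gamma_trans lt_gamma_total yx_lpos x_lpos).
have [kx x_lead ->] : exists2 k, is_lead lt_gamma (Phi x) k & v x = Some (gamma k).
  by apply: v_neq0; rewrite -Phi_eq0; apply: lpos_neq0 x_lpos.
have [ky y_lead ->] : exists2 k, is_lead lt_gamma (Phi y) k & v y = Some (gamma k).
  by apply: v_neq0; rewrite -Phi_eq0; apply: lpos_neq0 y_lpos.
apply: (not_strict_le le0_total).
exact: (lead_antitone lt_gamma_trans lt_gamma_total x_lpos yx_lpos x_lead y_lead).
Qed.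

Lemma v_idem x : v_inf v (v x) = v x.
Proof.
by case: (eqVneq x 0) => [-> | /v_neq0 [k _ ->]]; rewrite ?v0 //= v_gamma.
Qed.

Lemma v_gt0 x : lt_inf le1 (Some 0) (v x).
Proof.
case: (eqVneq x 0) => [-> | /v_neq0 [k _ ->]]; first by rewrite v0.
apply/lt_inf_Some/strict_le1; rewrite Phi_gamma (unitri_inv0 decode_bnd) subr0.
by exists k; exact: (lpos_at_unit C lt_gamma_irr k).
Qed.

Lemma v_hamel : hamel_valuation le0 le1 v.
Proof.
split; first exact: v_eq_None.
split; [exact: v_addr | exact: vZ | exact: v_le1_antitone | exact: v_idem | exact: v_gt0].
Qed.

Lemma lt_gamma_coef0 s k : (0 < k.1)%N -> (gamma s)@_idx0 < (decode k)@_idx0 -> lt_gamma s k.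
Proof.
move=> k_gt0 lt_sk; apply/(lex_lt (@idx_lt C)); exists idx0.
apply: (lpos_at_min (@idx_lt0 C)); rewrite gammaE mcoeffB mcoeffD mcoeffU.
by case: (eqVneq k idx0) => [k0 | _]; [rewrite k0 in k_gt0 | rewrite mulr0n add0r subr_gt0].
Qed.

Lemma fresh_pair (j : idx) (d : H) (m : nat) : exists k1 k2 : idx, [/\ (m < k1.1)%N, (m < k2.1)%N,
  lt_gamma j k1, lt_gamma j k2 & decode k1 - decode k2 = d].
Proof.
(* idx0 is the most significant index, and N dominates the idx0-coordinates involved. *)
pose N : C := `|(gamma j)@_idx0| + `|d@_idx0| + 1.
have [k1 [mk1 dec_k1]] := decode_fresh (d + N *: << idx0 >>) m.
have [k2 [mk2 dec_k2]] := decode_fresh (N *: << idx0 >>) m.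
have N_coef : (N *: << idx0 >> : H)@_idx0 = N by rewrite mcoeffZ mcoeffUU mulr1.
have := normr_ge0 (d@_idx0); have := ler_norm ((gamma j)@_idx0).
have := ler_norm (- d@_idx0); rewrite normrN => d_le g_le d_ge0.
exists k1, k2; split; [exact: mk1 | exact: mk2 | | | by rewrite dec_k1 dec_k2 addrK].
  apply: (lt_gamma_coef0 (leq_ltn_trans (leq0n _) mk1)).
  by rewrite dec_k1 mcoeffD N_coef /N; lra.
apply: (lt_gamma_coef0 (leq_ltn_trans (leq0n _) mk2)).
by rewrite dec_k2 N_coef /N; lra.
Qed.

Lemma le1_independent : independent le0 le1.
Proof.
move=> a0 b0 a1 b1 ab0 /(lt_ext_pullback Phi_inj) ab1.
have [m0 [j0 near0]] := lex_nbhd (@idx_lt_irr C) (@idx_lt_trans C) idx0 ab0.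
have [m1 [j1 near1]] := lex_nbhd lt_gamma_irr lt_gamma_trans idx0 ab1.
have [k1 [k2 [j0k1 j0k2 j1k1 j1k2 dec_k12]]] := fresh_pair j1 (Psi m1 - m0) j0.1.
pose u : H := << k2 >> - << k1 >>.
have Phi_z : Phi (m0 + u) = m1 + u.
  apply: (unitri_inj decode_bnd).
  rewrite (unitri_invK decode_bnd) unitriD unitriB !unitriU -[Psi m1](subrK m0) -dec_k12.
  by apply/malgP => i; rewrite !(mcoeffD, mcoeffB, mcoeffN); ring.
have [a0z zb0] := near0 u (small_unitB (idx_lt_level j0k1) (idx_lt_level j0k2)).
have [a1z zb1] := near1 u (small_unitB j1k1 j1k2).
by exists (m0 + u); split=> //; apply/(lt_ext_pullback Phi_inj); rewrite /= Phi_z.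
Qed.

Lemma le0_dense : dense le0 v.
Proof.
move=> a b ab.
have [m [j near]] :=
  lex_nbhd (@idx_lt_irr C) (@idx_lt_trans C) idx0 (ab : lt_ext le0 (Fin a) (Fin b)).
have [k [jk dec_k]] := decode_fresh m j.1.
have [am mb] := near _ (small_unit (idx_lt_level jk)).
by exists (gamma k); rewrite v_gamma gammaE dec_k addrC; split; apply: lt_inf_Some.
Qed.
End Model.

Theorem lemma4p8 (C : realFieldType) :
  exists (G : lmodType C) (le0 le1 : G -> G -> Prop) (v : G -> option G),
    [/\ hamel_space le0 le1 v, independent le0 le1 & dense le0 v].
Proof.
exists ({malg C[idx C]} : lmodType C), (@le0 C), (@le1 C), (@v C).
split; [split; [split; [exact: le0_ordered | exact: le1_ordered] | exact: v_hamel] | |].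
- exact: le1_independent.
- exact: le0_dense.
Qed.
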